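(* Let $0<|a|<M$. Then $$\{\xi_t<0\}\cap\{\xi\cdot v_{\mathcal H}>0\}\cap K=\emptyset,$$ where $K\subset T^*{\rm M}_{\rm I}\setminus o$ is the trapped set.
   Context: ${\rm M}_{\rm I}=\mathbb R_t\times(r_+,\infty)_r\times\mathbb S^2_{\theta,\varphi}$ is the Kerr exterior in Boyer–Lindquist coordinates with $r_+=M+\sqrt{M^2-a^2}$, $\Delta=r^2-2Mr+a^2$, $\rho^2=r^2+a^2\cos^2\theta$, $\sigma^2=(r^2+a^2)^2-a^2\Delta\sin^2\theta$, and metric $g=-(1-\tfrac{2Mr}{\rho^2})dt^2-\tfrac{4aMr\sin^2\theta}{\rho^2}dt\,d\varphi+\tfrac{\rho^2}{\Delta}dr^2+\rho^2d\theta^2+\tfrac{\sigma^2}{\rho^2}\sin^2\theta\,d\varphi^2$. Covectors are $\xi=\xi_tdt+\xi_rdr+\xi_\theta d\theta+\xi_\varphi d\varphi$, $\tilde\xi=(\xi_t,\xi_r,\xi_\varphi,\xi_\theta)$. Set $G_r=\Delta\xi_r^2-\frac1\Delta((r^2+a^2)\xi_t+a\xi_\varphi)^2$, $G_\theta=\xi_\theta^2+\frac1{\sin^2\theta}(a\sin^2\theta\xi_t+\xi_\varphi)^2$, $G=G_r+G_\theta=\rho^{-2}g^{-1}(\xi,\xi)$. The trapped set is $K=\{G=\partial_rG_r=\xi_r=0,\ \tilde\xi\neq0\}$ (with $\partial_r$ taken at fixed $\xi$). The Killing field $v_{\mathcal H}=\partial_t+\Omega_{\mathcal H}\partial_\varphi$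 with $\Omega_{\mathcal H}=a/(r_+^2+a^2)$, so $\xi\cdot v_{\mathcal H}=\xi_t+\Omega_{\mathcal H}\xi_\varphi$ (on the rotation axis $v_{\mathcal H}=\partial_t$ in the regular coordinates $(t,r,x_1,x_2)$, $x_1=\sin\theta\cos\varphi$, $x_2=\sin\theta\sin\varphi$). *)

From Stdlib Require Import Reals.
From Coquelicot Require Import Coquelicot.
Open Scope R_scope.

(* Kerr quantities in Boyer--Lindquist coordinates. *)
Definition r_plus (M a : R) : R := M + sqrt (M ^ 2 - a ^ 2).
Definition Delta (M a r : R) : R := r ^ 2 - 2 * M * r + a ^ 2.
Definition Omega_H (M a : R) : R := a / (r_plus M a ^ 2 + a ^ 2).

(* G_r and G_theta for the covector xi = xi_t dt + xi_r dr + xi_th dth + xi_ph dph *)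
Definition G_r (M a r xi_t xi_r xi_ph : R) : R :=
  Delta M a r * xi_r ^ 2
  - / Delta M a r * ((r ^ 2 + a ^ 2) * xi_t + a * xi_ph) ^ 2.

Definition G_th (a th xi_t xi_th xi_ph : R) : R :=
  xi_th ^ 2 + / (sin th ^ 2) * (a * sin th ^ 2 * xi_t + xi_ph) ^ 2.

Definition G (M a r th xi_t xi_r xi_th xi_ph : R) : R :=
  G_r M a r xi_t xi_r xi_ph + G_th a th xi_t xi_th xi_ph.

(* Trapped set K = {G = d_r G_r = xi_r = 0, tilde xi <> 0}, where d_r is
   taken at fixed xi (the components of xi are held constant). *)
Definition trapped (M a r th xi_t xi_r xi_th xi_ph : R) : Prop :=
  G M a r th xi_t xi_r xi_th xi_ph = 0 /\
  Derive (fun s => G_r M a s xi_t xi_r xi_ph) r = 0 /\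
  xi_r = 0 /\
  ~ (xi_t = 0 /\ xi_r = 0 /\ xi_ph = 0 /\ xi_th = 0).

(** With [xi_r = 0] put [P = (r^2+a^2) xi_t + a xi_ph].  The condition
    [d_r G_r = 0] reads [P ((r-M) P - 2 r xi_t Delta) = 0].  If [P = 0] then
    [G = G_th = 0] forces [a sin^2 th xi_t + xi_ph = 0], and subtracting the two
    linear relations gives [(r^2 + a^2 cos^2 th) xi_t = 0], so [xi_t = 0].
    Otherwise [(r-M) P = 2 r xi_t Delta], and factoring
    [Delta = (r - r_+)(r - 2M + r_+)] yields
    [(r-M) ((r_+^2+a^2) xi_t + a xi_ph) = xi_t (r - r_+) (r^2 + (r_+-3M) r + M r_+)],
    whose right side is negative when [xi_t < 0], while the left side is
    [(r-M)(r_+^2+a^2) (xi . v_H)], positive when [xi . v_H > 0]. *)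
From Pilot Require Import Defs.
From Stdlib Require Import Reals Lra Psatz.
From Coquelicot Require Import Coquelicot.
Open Scope R_scope.

Section Horizon.

Variables M a : R.
Hypothesis subextremal : 0 < Rabs a < M.

Let rp := r_plus M a.

Lemma sq_lt_sq_subextremal : a ^ 2 < M ^ 2.
Proof.
  destruct subextremal; rewrite <- (pow2_abs a); pose proof (Rabs_pos a); nra.
Qed.

Lemma r_plus_gt_M : M < rp.
Proof.
  pose proof sq_lt_sq_subextremal.
  unfold rp, r_plus; pose proof (sqrt_lt_R0 (M ^ 2 - a ^ 2)); lra.
Qed.

Lemma Delta_factor (r : R) : Defs.Delta M a r = (r - rp) * (r - (2 * M - rp)).
Proof.
  pose proof sq_lt_sq_subextremal.
  assert (Hs : sqrt (M ^ 2 - a ^ 2) * sqrt (M ^ 2 - a ^ 2) = M ^ 2 - a ^ 2)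
    by (apply sqrt_sqrt; lra).
  unfold Defs.Delta, rp, r_plus; nra.
Qed.

Lemma Delta_gt0 (r : R) : rp < r -> 0 < Defs.Delta M a r.
Proof.
  intro Hr; rewrite Delta_factor; pose proof r_plus_gt_M.
  apply Rmult_lt_0_compat; lra.
Qed.

Lemma Omega_H_pairing_gt0 (xi_t xi_ph : R) :
  xi_t + Omega_H M a * xi_ph > 0 -> (rp ^ 2 + a ^ 2) * xi_t + a * xi_ph > 0.
Proof.
  intro H; pose proof r_plus_gt_M.
  assert (Hpos : 0 < rp ^ 2 + a ^ 2) by (pose proof (pow2_ge_0 a); nra).
  replace ((rp ^ 2 + a ^ 2) * xi_t + a * xi_ph)
    with ((rp ^ 2 + a ^ 2) * (xi_t + Omega_H M a * xi_ph))
    by (unfold Omega_H; fold rp; field; lra).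
  apply Rmult_lt_0_compat; lra.
Qed.

(** The identity that carries the condition [d_r G_r = 0] from the radius [r]
    to the horizon [r_+]. *)
Lemma horizon_pairing_identity (r xi_t xi_ph : R) :
  (r - M) * ((r ^ 2 + a ^ 2) * xi_t + a * xi_ph) = 2 * r * xi_t * Defs.Delta M a r ->
  (r - M) * ((rp ^ 2 + a ^ 2) * xi_t + a * xi_ph)
  = xi_t * ((r - rp) * (r ^ 2 + (rp - 3 * M) * r + M * rp)).
Proof. rewrite Delta_factor; intro Heq; nra. Qed.

Lemma horizon_cubic_gt0 (r : R) :
  rp < r -> 0 < (r - rp) * (r ^ 2 + (rp - 3 * M) * r + M * rp).
Proof.
  intro Hr; pose proof r_plus_gt_M.
  replace (r ^ 2 + (rp - 3 * M) * r + M * rp)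
    with ((r - rp) * (r + 2 * rp - 3 * M) + 2 * rp * (rp - M)) by ring.
  apply Rmult_lt_0_compat; [lra|].
  assert (0 < (r - rp) * (r + 2 * rp - 3 * M)) by (apply Rmult_lt_0_compat; lra).
  assert (0 < 2 * rp * (rp - M)) by nra.
  lra.
Qed.

End Horizon.

Lemma Derive_G_r (M a r xi_t xi_r xi_ph : R) : Defs.Delta M a r <> 0 ->
  Derive (fun s => G_r M a s xi_t xi_r xi_ph) r =
  (2 * r - 2 * M) * xi_r ^ 2
  + (2 * r - 2 * M) * / Defs.Delta M a r ^ 2 * ((r ^ 2 + a ^ 2) * xi_t + a * xi_ph) ^ 2
  - / Defs.Delta M a r * (2 * ((r ^ 2 + a ^ 2) * xi_t + a * xi_ph) * (2 * r * xi_t)).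
Proof.
  intro HD; apply is_derive_unique; unfold G_r, Defs.Delta in *.
  auto_derive; [exact HD|]. field. exact HD.
Qed.

Lemma Derive_G_r_eq0 (M a r xi_t xi_ph : R) : Defs.Delta M a r <> 0 ->
  Derive (fun s => G_r M a s xi_t 0 xi_ph) r = 0 ->
  let P := (r ^ 2 + a ^ 2) * xi_t + a * xi_ph in
  P * ((r - M) * P - 2 * r * xi_t * Defs.Delta M a r) = 0.
Proof.
  intros HD Hd P; rewrite Derive_G_r in Hd by exact HD; fold P in Hd.
  apply (f_equal (fun x => x * Defs.Delta M a r ^ 2 / 2)) in Hd.
  transitivity (0 * Defs.Delta M a r ^ 2 / 2); [rewrite <- Hd; field; exact HD | field].
Qed.

Lemma G_th_eq0 (a th xi_t xi_th xi_ph : R) : sin th <> 0 ->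
  G_th a th xi_t xi_th xi_ph = 0 ->
  xi_th = 0 /\ a * sin th ^ 2 * xi_t + xi_ph = 0.
Proof.
  intros Hsin HG; unfold G_th in HG.
  set (W := a * sin th ^ 2 * xi_t + xi_ph) in *.
  assert (Hs2 : 0 < sin th ^ 2) by (apply pow2_gt_0; exact Hsin).
  assert (HW : 0 <= / sin th ^ 2 * W ^ 2)
    by (apply Rmult_le_pos; [left; apply Rinv_0_lt_compat | apply pow2_ge_0]; lra).
  assert (Hth : xi_th = 0) by nra.
  split; [exact Hth|].
  assert (HW2 : / sin th ^ 2 * W ^ 2 = 0) by nra.
  apply Rmult_integral in HW2 as [Hinv | HW2].
  - exfalso; apply (Rinv_neq_0_compat (sin th ^ 2)); lra.
  - nra.
Qed.

Lemma xi_t_eq0_of_null_pairings (a r th xi_t xi_ph : R) : 0 < r ->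
  (r ^ 2 + a ^ 2) * xi_t + a * xi_ph = 0 ->
  a * sin th ^ 2 * xi_t + xi_ph = 0 -> xi_t = 0.
Proof.
  intros Hr HP HW.
  assert (Hsin2 : sin th ^ 2 <= 1)
    by (pose proof (sin2_cos2 th); pose proof (Rle_0_sqr (cos th)); unfold Rsqr in *; nra).
  assert (Hx : (r ^ 2 + a ^ 2 * (1 - sin th ^ 2)) * xi_t = 0) by nra.
  apply Rmult_integral in Hx as [Hx | Hx]; [|exact Hx].
  pose proof (pow2_ge_0 a); nra.
Qed.

Theorem lemma6p5 (M a : R) (Ha : 0 < Rabs a < M) :
  forall t r th ph xi_t xi_r xi_th xi_ph : R,
    r_plus M a < r -> 0 < th < PI ->
    trapped M a r th xi_t xi_r xi_th xi_ph ->
    ~ (xi_t < 0 /\ xi_t + Omega_H M a * xi_ph > 0).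
Proof.
  intros t r th ph xi_t xi_r xi_th xi_ph Hr Hth [HG [Hd [-> _]]] [Hneg Hpos].
  pose proof (r_plus_gt_M M a Ha) as HrpM.
  pose proof (Delta_gt0 M a Ha r Hr) as HD.
  apply Derive_G_r_eq0 in Hd; [|lra].
  set (P := (r ^ 2 + a ^ 2) * xi_t + a * xi_ph) in Hd.
  apply Rmult_integral in Hd as [HP | Hcrit].
  - assert (HGth : G_th a th xi_t xi_th xi_ph = 0).
    { unfold G, G_r in HG; fold P in HG; rewrite HP in HG.
      replace (G_th a th xi_t xi_th xi_ph) with
        (Defs.Delta M a r * 0 ^ 2 - / Defs.Delta M a r * 0 ^ 2 + G_th a th xi_t xi_th xi_ph)
        by ring.
      exact HG. }
    apply G_th_eq0 in HGth as [_ HW]; [|apply Rgt_not_eq, sin_gt_0; lra].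
    pose proof (xi_t_eq0_of_null_pairings a r th xi_t xi_ph ltac:(lra) HP HW); lra.
  - pose proof (horizon_pairing_identity M a Ha r xi_t xi_ph ltac:(unfold P in Hcrit; lra))
      as Hid.
    pose proof (Omega_H_pairing_gt0 M a Ha xi_t xi_ph Hpos) as HH.
    pose proof (horizon_cubic_gt0 M a Ha r Hr) as Hcub.
    assert (0 < (r - M) * ((r_plus M a ^ 2 + a ^ 2) * xi_t + a * xi_ph))
      by (apply Rmult_lt_0_compat; lra).
    nra.
Qed.
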